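(* Let $m=2^p$ and let $r_1,\dots,r_m\in\{1,\dots,m\}$ (repetitions allowed). Let $A$ be the $m\times m$ matrix whose $i$-th row is the $r_i$-th row of $H(m)$. If $b(r_1-1)\oplus b(r_2-1)\oplus\dots\oplus b(r_m-1)\neq 0$, then $\mathrm{perm}\,A=0$.
   Context: For $m=2^p$, the Sylvester matrix $H(m)$ is defined recursively by $H(1)=[1]$ and $H(2^p)=\begin{bmatrix}H(2^{p-1})&H(2^{p-1})\\ H(2^{p-1})&-H(2^{p-1})\end{bmatrix}$, rows and columns indexed $1,\dots,m$; equivalently $[H(m)]_{i,j}=(-1)^{b(i-1)\odot b(j-1)}$. Here $b(x)$ denotes the $p$-bit binary representation of $x\in\{0,\dots,m-1\}$, $\odot$ is the bitwise dot product, and $\oplus$ is bitwise XOR. $\mathrm{perm}\,A=\sum_{\sigma\in S_m}\prod_{i=1}^m a_{i,\sigma(i)}$. *)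

From HB Require Import structures.
From mathcomp Require Import all_boot all_order all_algebra all_fingroup.
Set Implicit Arguments. Unset Strict Implicit. Unset Printing Implicit Defensive.
Import GRing.Theory.
Local Open Scope ring_scope.

Definition bin (p x : nat) : {ffun 'I_p -> bool} :=
  [ffun k : 'I_p => odd (x %/ 2 ^ k)].

Definition bxor (p : nat) (u v : {ffun 'I_p -> bool}) : {ffun 'I_p -> bool} :=
  [ffun k => u k (+) v k].

Definition bzero (p : nat) : {ffun 'I_p -> bool} := [ffun _ => false].

Definition bdot (p : nat) (u v : {ffun 'I_p -> bool}) : bool :=
  \big[addb/false]_(k < p) (u k && v k).

(* Sylvester matrix H(2^p), 0-indexed: entry (i,j) (i,j in 0..m-1) corresponds
   to the paper's entry (i+1, j+1) = (-1)^{b(i) . b(j)}. *)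
Definition sylvester (p : nat) : 'M[int]_(2 ^ p) :=
  \matrix_(i, j) ((-1) ^+ bdot (bin p i) (bin p j)).

Definition permanent (R : comNzRingType) (n : nat) (A : 'M[R]_n) : R :=
  \sum_(s : 'S_n) \prod_(i < n) A i (s i).

From HB Require Import structures.
From mathcomp Require Import all_boot all_order all_algebra all_fingroup.
From mathcomp Require Import zify.

Set Implicit Arguments.
Unset Strict Implicit.
Unset Printing Implicit Defensive.

(* Pick a bit position k at which the XOR of the row labels b(r_i) is 1, and
   permute the columns by the involution j |-> j xor 2^k. Since
   b(r).b(j xor 2^k) = b(r).b(j) + b(r)_k, this multiplies row i by
   (-1)^(b(r_i)_k), hence the whole permanent by the product of these signs,
   which is -1. A permanent is invariant under column permutations, so it
   equals its own opposite, and vanishes in the integers. *)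

Definition flipbit (k j : nat) : nat :=
  if odd (j %/ 2 ^ k) then j - 2 ^ k else j + 2 ^ k.

Lemma odd_divn_addX (j k i : nat) : ~~ odd (j %/ 2 ^ k) ->
  odd ((j + 2 ^ k) %/ 2 ^ i) = odd (j %/ 2 ^ i) (+) (i == k).
Proof.
move=> jk0; case: (leqP i k) => [le_ik | lt_ki].
  rewrite -(subnK le_ik) expnD divnDMl ?expn_gt0 // oddD oddX orbF.
  by congr (_ (+) _); apply/eqP/eqP; lia.
rewrite gtn_eqF // addbF.
have -> : 2 ^ i = 2 ^ k * 2 * 2 ^ (i - k.+1).
  by rewrite -expnSr -expnD; congr (2 ^ _); lia.
rewrite !divnMA -[X in _ + X](mul1n (2 ^ k)) divnDMl ?expn_gt0 //.
congr (odd (_ %/ _)).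
have : (j %/ 2 ^ k) %% 2 = 0 by rewrite modn2; case: odd jk0.
lia.
Qed.

(* The quotient [j %/ 2^k] is even and below the even number [2^(p-k)],
   so it is at most [2^(p-k) - 2]; adding [2^k] raises it by only one. *)
Lemma addX_ltn_expn (p k j : nat) : k < p -> j < 2 ^ p ->
  ~~ odd (j %/ 2 ^ k) -> j + 2 ^ k < 2 ^ p.
Proof.
move=> lt_kp lt_jp jk0; set q := j %/ 2 ^ k in jk0.
have def2p : 2 ^ p = 2 ^ (p - k.+1) * 2 * 2 ^ k.
  by rewrite -expnSr -expnD; congr (2 ^ _); lia.
have lt_q : q < 2 ^ (p - k.+1) * 2 by rewrite ltn_divLR ?expn_gt0 -?def2p.
have le_q2 : q.+2 <= 2 ^ (p - k.+1) * 2.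
  have : q %% 2 = 0 by rewrite modn2; case: odd jk0.
  lia.
have := ltn_pmod j (expn_gt0 2 k); rewrite {1}(divn_eq j (2 ^ k)) -/q.
have := leq_mul le_q2 (leqnn (2 ^ k)); rewrite def2p; nia.
Qed.

Lemma expn_leq_odd_divn (j k : nat) : odd (j %/ 2 ^ k) -> 2 ^ k <= j.
Proof.
by move=> jk1; rewrite -divn_gt0 ?expn_gt0 //; move: jk1; case: (j %/ 2 ^ k).
Qed.

Lemma flipbit_bit (k j i : nat) :
  odd (flipbit k j %/ 2 ^ i) = odd (j %/ 2 ^ i) (+) (i == k).
Proof.
rewrite /flipbit; case: ifP => [jk1 | /negbT jk0]; last exact: odd_divn_addX.
have le_kj : 2 ^ k <= j by exact: expn_leq_odd_divn.
have jk0 : ~~ odd ((j - 2 ^ k) %/ 2 ^ k).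
  move: jk1; rewrite -{1}(subnK le_kj) -[X in _ + X](mul1n (2 ^ k)).
  by rewrite divnDMl ?expn_gt0 // oddD addbT.
by rewrite -{2}(subnK le_kj) odd_divn_addX // -addbA addbb addbF.
Qed.

Lemma flipbitK (k : nat) : involutive (flipbit k).
Proof.
move=> j; have := flipbit_bit k j k; rewrite eqxx addbT => flip_k.
rewrite {1}/flipbit flip_k /flipbit.
case: (boolP (odd _)) => [jk1 | _] /=; last lia.
have : 2 ^ k <= j by exact: expn_leq_odd_divn.
lia.
Qed.

Lemma flipbit_ltn (p k j : nat) : k < p -> j < 2 ^ p -> flipbit k j < 2 ^ p.
Proof.
move=> lt_kp lt_jp; rewrite /flipbit; case: ifP => [_ | /negbT jk0].
  exact: leq_ltn_trans (leq_subr _ _) lt_jp.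
exact: addX_ltn_expn.
Qed.

Local Open Scope ring_scope.
Import GRing.Theory.

Section Permanent.

Variables (R : comNzRingType) (n : nat).

Lemma permanent_col_perm (s : 'S_n) (A : 'M[R]_n) :
  permanent (col_perm s A) = permanent A.
Proof.
rewrite /permanent (reindex_inj (mulIg s^-1%g)) /=.
apply: eq_bigr => t _; apply: eq_bigr => i _.
by rewrite mxE permM permKV.
Qed.

Lemma permanent_scale_rows (c : 'I_n -> R) (A : 'M[R]_n) :
  permanent (\matrix_(i, j) (c i * A i j)) = (\prod_i c i) * permanent A.
Proof.
rewrite /permanent mulr_sumr; apply: eq_bigr => s _.
by rewrite -big_split; apply: eq_bigr => i _; rewrite mxE.
Qed.

End Permanent.

Section BitVectors.

Variable p : nat.
Implicit Types (u v w : {ffun 'I_p -> bool}) (k : 'I_p).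

Definition bunit k : {ffun 'I_p -> bool} := [ffun i => i == k].

Lemma bxorE u v k : bxor u v k = u k (+) v k.
Proof. exact: ffunE. Qed.

Lemma bdot_bxorr u v w : bdot u (bxor v w) = bdot u v (+) bdot u w.
Proof.
rewrite /bdot -big_split; apply: eq_bigr => i _.
by rewrite bxorE; case: (u i).
Qed.

Lemma bdot_bunitr u k : bdot u (bunit k) = u k.
Proof.
rewrite /bdot (bigD1 k) //= ffunE eqxx andbT big1 ?addbF // => i /negbTE ik.
by rewrite ffunE ik andbF.
Qed.

Lemma big_bxorE (I : Type) (s : seq I) (P : pred I) F k :
  (\big[@bxor p/bzero p]_(i <- s | P i) F i) k =
  \big[addb/false]_(i <- s | P i) F i k.
Proof. by apply: (big_morph (fun u => u k)) => [u v|]; rewrite ffunE. Qed.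

Lemma bitvec_neq0 u : u != bzero p -> exists k, u k.
Proof.
move=> u_neq0; case: (pickP (fun k => u k)) => [k uk | u0]; first by exists k.
by case/eqP: u_neq0; apply/ffunP => k; rewrite ffunE u0.
Qed.

End BitVectors.

Lemma prod_signr_addb (R : pzRingType) (I : Type) (s : seq I) (P : pred I)
    (b : I -> bool) :
  \prod_(i <- s | P i) ((-1) ^+ b i : R) =
  (-1) ^+ \big[addb/false]_(i <- s | P i) b i.
Proof.
by apply/esym/(big_morph (fun c : bool => (-1) ^+ c : R)) => [c d|];
  rewrite ?signr_addb.
Qed.

Section FlipColumns.

Variables (p : nat) (k : 'I_p).

Definition flip_ord (j : 'I_(2 ^ p)) : 'I_(2 ^ p) :=
  Ordinal (flipbit_ltn (ltn_ord k) (ltn_ord j)).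

Lemma flip_ordK : involutive flip_ord.
Proof. by move=> j; apply: val_inj; rewrite /= flipbitK. Qed.

Definition flip_perm : 'S_(2 ^ p) := perm (inv_inj flip_ordK).

Lemma bin_flip_perm (j : 'I_(2 ^ p)) :
  bin p (flip_perm j) = bxor (bin p j) (bunit k).
Proof. by apply/ffunP => i; rewrite permE !ffunE /= flipbit_bit. Qed.

Lemma sylvester_flip_perm (i j : 'I_(2 ^ p)) :
  sylvester p i (flip_perm j) = (-1) ^+ bin p i k * sylvester p i j.
Proof.
by rewrite !mxE bin_flip_perm bdot_bxorr bdot_bunitr signr_addb mulrC.
Qed.

End FlipColumns.

Theorem proposition5 (p : nat) (r : 'I_(2 ^ p) -> 'I_(2 ^ p)) :
  \big[@bxor p/bzero p]_(i < 2 ^ p) bin p (r i) != bzero p ->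
  permanent (\matrix_(i, j) sylvester p (r i) j) = 0.
Proof.
move=> /bitvec_neq0 [k xor_k].
set A := \matrix_(i, j) _.
have sign_rows : \prod_i ((-1) ^+ bin p (r i) k : int) = -1.
  by rewrite prod_signr_addb -big_bxorE xor_k expr1.
have flip_cols : col_perm (flip_perm k) A
    = \matrix_(i, j) ((-1) ^+ bin p (r i) k * A i j).
  apply/matrixP => i j; rewrite mxE [RHS]mxE /A.
  by rewrite !(mxE _ (fun i j => sylvester p (r i) j)) sylvester_flip_perm.
have : permanent A = - permanent A.
  by rewrite -{1}(permanent_col_perm (flip_perm k)) flip_cols
       permanent_scale_rows sign_rows mulN1r.
lia.
Qed.
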